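(* Let $\mathsf{G}$ be a global type. If $\mathsf{G}$ is bounded, then its event structure $\mathcal{S}(\mathsf{G})$ is semantically bounded.
   Context: Participants are ranged over by $\mathsf{p},\mathsf{q},\mathsf{r},\mathsf{s}$ and message labels by $\lambda$. Global types are defined coinductively (and assumed regular, i.e. with finitely many distinct subtrees): $\mathsf{G} ::= \mathsf{p}\to\mathsf{q}:\{\lambda_i;\mathsf{G}_i\}_{i\in I} \mid \mathsf{End}$, with $I$ finite non-empty and the $\lambda_i$ pairwise distinct. A communication is $\alpha=\mathsf{p}\mathsf{q}\lambda$ with $\mathrm{part}(\mathsf{p}\mathsf{q}\lambda)=\{\mathsf{p},\mathsf{q}\}$; a trace is a finite sequence of communications, $\mathrm{part}$ extended to traces by union, $|\sigma|$ its length. $\mathrm{Tr}(\mathsf{End})=\emptyset$, $\mathrm{Tr}(\mathsf{p}\to\mathsf{q}:\{\lambda_i;\mathsf{G}_i\}_{i\in I})=\{\mathsf{p}\mathsf{q}\lambda_i\cdot\sigma\mid i\in I,\ \sigma=\epsilon\text{ or }\sigma\in\mathrm{Tr}(\mathsf{G}_i)\}$. Depth: $\mathrm{depth}(\mathsf{p},\sigma)=|\sigma_1\cdot\alpha|$ if $\sigma=\sigma_1\cdot\alpha\cdot\sigma_2$ with $\mathsf{p}\notin\mathrm{part}(\sigma_1)$ and $\mathsf{p}\in\mathrm{part}(\alpha)$, and $0$ otherwise; $\mathrm{depth}(\mathsf{p},\mathsf{G})=\sup\{\mathrm{depth}(\mathsf{p},\sigma)\mid\sigma\in\mathrm{Tr}(\mathsf{G})\}$.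 $\mathsf{G}$ is bounded if $\mathrm{depth}(\mathsf{p},\mathsf{G}')$ is finite for every participant $\mathsf{p}$ and every subtree $\mathsf{G}'$ of $\mathsf{G}$. Event structure of $\mathsf{G}$: permutation equivalence $\sim$ is the least equivalence on traces with $\sigma\cdot\alpha\cdot\alpha'\cdot\sigma'\sim\sigma\cdot\alpha'\cdot\alpha\cdot\sigma'$ whenever $\mathrm{part}(\alpha)\cap\mathrm{part}(\alpha')=\emptyset$; $[\sigma]$ is the class of $\sigma$. A non-empty trace $\sigma=\sigma[1]\cdots\sigma[n]$ is pointed if for every $1\le i<n$ there is $j$ with $i<j\le n$ and $\mathrm{part}(\sigma[i])\cap\mathrm{part}(\sigma[j])\ne\emptyset$. A g-event is $[\sigma]$ with $\sigma$ pointed. Causal prefixing: $\alpha\circ[\sigma]=[\alpha\cdot\sigma]$ if $\mathrm{part}(\alpha)\cap\mathrm{part}(\sigma)\ne\emptyset$, $=[\sigma]$ otherwise; $\epsilon\circ\gamma=\gamma$, $(\alpha\cdot\sigma)\circ\gamma=\alpha\circ(\sigma\circ\gamma)$. $\mathrm{ev}(\sigma\cdot\alpha)=\sigma\circ[\alpha]$. Causality: $\gamma\le\gamma'$ if $\gamma=[\sigma]$ and $\gamma'=[\sigma\cdot\sigma']$ for some $\sigma,\sigma'$. Conflict: $\gamma\#\gamma'$ if $\gamma=[\sigma\cdot\mathsf{p}\mathsf{q}\lambda_1\cdot\sigma_1]$, $\gamma'=[\sigma\cdot\mathsf{p}\mathsf{q}\lambda_2\cdot\sigma_2]$ with $\lambda_1\ne\lambda_2$.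 $\mathcal{S}(\mathsf{G})=(\mathcal{E}(\mathsf{G}),\le_{\mathsf{G}},\#_{\mathsf{G}})$ with $\mathcal{E}(\mathsf{G})=\{\mathrm{ev}(\sigma)\mid\sigma\in\mathrm{Tr}(\mathsf{G})\}$ and the relations restricted to $\mathcal{E}(\mathsf{G})$. Semantic boundedness: for an event structure $S=(E,\le,\#)$ of this kind, a participant $\mathsf{p}$ is in $\mathrm{part}(S)$ if $\mathsf{p}\in\mathrm{part}(\sigma)$ for some $[\sigma]\in E$. For $k\in\mathbb{N}$, $\mathrm{depth}^k(\mathsf{p},[\sigma])=|\sigma|$ if $\sigma=\sigma_1\cdot\alpha_1\cdots\sigma_k\cdot\alpha_k$ with $\mathsf{p}\in\mathrm{part}(\alpha_i)$ and $\mathsf{p}\notin\mathrm{part}(\sigma_i)$ for $i=1,\dots,k$, and $0$ otherwise; $\mathrm{depth}^k(\mathsf{p},S)=\sup\{\mathrm{depth}^k(\mathsf{p},\gamma)\mid\gamma\in E\}$. $S$ is semantically bounded if $\mathrm{depth}^k(\mathsf{p},S)$ is finite for every $\mathsf{p}\in\mathrm{part}(S)$ and every $k\in\mathbb{N}$. *)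

From Stdlib Require Import List Arith Relations.
Import ListNotations.

Definition participant := nat.
Definition label := nat.

(* Global types, coinductively: p -> q : {lambda_i ; G_i}_{i in I} | End.
   The branches are a (finite) list of (label, continuation) pairs. *)
CoInductive gtype : Type :=
| GEnd : gtype
| GComm : participant -> participant -> list (label * gtype) -> gtype.

Inductive child : gtype -> gtype -> Prop :=
| child_intro p q bs l G : In (l, G) bs -> child G (GComm p q bs).

Definition subtree : gtype -> gtype -> Prop := clos_refl_trans gtype child.

Definition local_wf (G : gtype) : Prop :=
  match G with
  | GEnd => True
  | GComm _ _ bs => bs <> [] /\ NoDup (map fst bs)
  end.

Definition wf (G : gtype) : Prop := forall G', subtree G' G -> local_wf G'.

CoInductive bisim : gtype -> gtype -> Prop :=
| bisim_end : bisim GEnd GEnd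
| bisim_comm p q bs bs' :
    Forall2 (fun x y => fst x = fst y /\ bisim (snd x) (snd y)) bs bs' ->
    bisim (GComm p q bs) (GComm p q bs').

Definition regular (G : gtype) : Prop :=
  exists l : list gtype, forall G', subtree G' G -> exists G'', In G'' l /\ bisim G' G''.

Definition comm := (participant * participant * label)%type.
Definition trace := list comm.

Definition part_c (a : comm) : list participant :=
  let '(p, q, _) := a in [p; q].
Definition part_t (s : trace) : list participant := flat_map part_c s.

Inductive InTr : gtype -> trace -> Prop :=
| tr_one p q bs l G : In (l, G) bs -> InTr (GComm p q bs) [(p, q, l)]
| tr_cons p q bs l G s : In (l, G) bs -> InTr G s -> InTr (GComm p q bs) ((p, q, l) :: s).

Definition inpartb (p : participant) (a : comm) : bool :=
  existsb (Nat.eqb p) (part_c a).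

Fixpoint depth (p : participant) (s : trace) : nat :=
  match s with
  | [] => 0
  | a :: s' => if inpartb p a then 1 else
                 match depth p s' with 0 => 0 | d => S d end
  end.

Definition bounded (G : gtype) : Prop :=
  forall (p : participant) (G' : gtype), subtree G' G ->
    exists n, forall s, InTr G' s -> depth p s <= n.

Definition disjoint_c (a b : comm) : Prop :=
  forall r, In r (part_c a) -> ~ In r (part_c b).

Inductive swap_step : trace -> trace -> Prop :=
| swap_intro s a b s' : disjoint_c a b -> swap_step (s ++ a :: b :: s') (s ++ b :: a :: s').

Definition perm_equiv : trace -> trace -> Prop := clos_refl_sym_trans trace swap_step.

(* Equivalence classes [sigma], represented as predicates on traces. *)
Definition event := trace -> Prop.
Definition cls (s : trace) : event := fun t => perm_equiv s t.

(* Causal prefixing, computed on representatives: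
   alpha o [sigma] = [alpha . sigma] if part(alpha) meets part(sigma), [sigma] otherwise;
   (alpha . sigma) o gamma = alpha o (sigma o gamma). *)
Definition meetsb (a : comm) (s : trace) : bool :=
  existsb (fun r => existsb (Nat.eqb r) (part_t s)) (part_c a).

Definition cprefix1 (a : comm) (s : trace) : trace :=
  if meetsb a s then a :: s else s.

Definition cprefix (s : trace) (t : trace) : trace := fold_right cprefix1 t s.

(* ev(sigma . alpha) = sigma o [alpha] *)
Definition ev (s : trace) : event :=
  match rev s with
  | [] => cls []            (* never used: traces of G are non-empty *)
  | a :: r => cls (cprefix (rev r) [a])
  end.

Record evstruct := { ES_E : event -> Prop; ES_le : event -> event -> Prop;
                     ES_conf : event -> event -> Prop }.

Definition causality (g g' : event) : Prop :=
  exists s s', g = cls s /\ g' = cls (s ++ s').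

Definition conflict (g g' : event) : Prop :=
  exists s p q l1 l2 s1 s2, l1 <> l2 /\
    g = cls (s ++ (p, q, l1) :: s1) /\ g' = cls (s ++ (p, q, l2) :: s2).

Definition events_of (G : gtype) (g : event) : Prop := exists s, InTr G s /\ g = ev s.

Definition S_of (G : gtype) : evstruct :=
  {| ES_E := events_of G;
     ES_le := fun g g' => events_of G g /\ events_of G g' /\ causality g g';
     ES_conf := fun g g' => events_of G g /\ events_of G g' /\ conflict g g' |}.

Definition part_S (S : evstruct) (p : participant) : Prop :=
  exists g s, ES_E S g /\ g s /\ In p (part_t s).

Inductive kdecomp (p : participant) : nat -> trace -> Prop :=
| kd0 : kdecomp p 0 []
| kdS k s1 a s2 : ~ In p (part_t s1) -> In p (part_c a) -> kdecomp p k s2 ->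
    kdecomp p (S k) (s1 ++ a :: s2).

(* depth^k(p, gamma) <= n, for gamma an equivalence class. *)
Definition depthk_le (k : nat) (p : participant) (g : event) (n : nat) : Prop :=
  forall s, g s -> kdecomp p k s -> length s <= n.

Definition sem_bounded (S : evstruct) : Prop :=
  forall p, part_S S p -> forall k : nat,
    exists n, forall g, ES_E S g -> depthk_le k p g n.

(* An event of S(G) is the class of a pointed trace [cprefix u [a]] obtained from a
   trace [u ++ [a]] of G by deleting communications that are not causally related to
   [a].  Pointedness forces every trace of the class to end with [a]; so if a
   representative splits into k blocks each ending with a p-communication, then p
   occurs in [a] and exactly k times in [u ++ [a]], and the representative is no
   longer than [u ++ [a]].  Cutting [u ++ [a]] at each occurrence of p gives k traces
   of subtrees of G, each of length at most the depth of p in that subtree; by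
   regularity these depths are bounded uniformly by some D, so every such
   representative has length at most k * D. *)
From Stdlib Require Import List Arith Relations Lia Classical.
Import ListNotations.

Definition count_part (p : participant) (s : trace) : nat :=
  length (filter (inpartb p) s).

Definition ends_in (p : participant) (s : trace) : Prop :=
  exists t a, s = t ++ [a] /\ In p (part_c a).

Lemma inpartb_true_iff p a : inpartb p a = true <-> In p (part_c a).
Proof.
  unfold inpartb. rewrite existsb_exists. split.
  - intros [r [Hr Heq]]. apply Nat.eqb_eq in Heq. subst. exact Hr.
  - intros H. exists p. split; [exact H | apply Nat.eqb_refl].
Qed.

Lemma part_t_cons c s : part_t (c :: s) = part_c c ++ part_t s.
Proof. reflexivity. Qed.

Lemma part_t_app s t : part_t (s ++ t) = part_t s ++ part_t t.
Proof. apply flat_map_app. Qed.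

Lemma count_part_cons p c s :
  count_part p (c :: s) = (if inpartb p c then 1 else 0) + count_part p s.
Proof. unfold count_part. simpl. destruct (inpartb p c); reflexivity. Qed.

Lemma count_part_app p s t : count_part p (s ++ t) = count_part p s + count_part p t.
Proof. unfold count_part. rewrite filter_app, length_app. reflexivity. Qed.

Lemma count_part_notin p s : ~ In p (part_t s) -> count_part p s = 0.
Proof.
  induction s as [|c s IH]; intros Hp; [reflexivity|].
  rewrite part_t_cons, in_app_iff in Hp. rewrite count_part_cons.
  destruct (inpartb p c) eqn:E.
  - apply inpartb_true_iff in E. tauto.
  - apply IH. tauto.
Qed.

Lemma count_part_block p s1 a s2 : ~ In p (part_t s1) -> In p (part_c a) ->
  count_part p (s1 ++ a :: s2) = S (count_part p s2).
Proof.
  intros H1 Ha. apply inpartb_true_iff in Ha.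
  rewrite count_part_app, count_part_cons, count_part_notin, Ha by exact H1.
  reflexivity.
Qed.

Lemma kdecomp_count_ends_in p k s :
  kdecomp p k s -> count_part p s = k /\ (s = [] \/ ends_in p s).
Proof.
  induction 1 as [|k s1 a s2 H1 Ha _ [Hc Hend]].
  - auto.
  - split; [rewrite count_part_block; auto|].
    right. destruct Hend as [->|[t [b [-> Hb]]]].
    + exists s1, a. auto.
    + exists (s1 ++ a :: t), b. split; [rewrite <- app_assoc; reflexivity | exact Hb].
Qed.

Definition meets (x : comm) (t : trace) : Prop :=
  exists r, In r (part_c x) /\ In r (part_t t).

Lemma meetsb_true_iff a s : meetsb a s = true <-> meets a s.
Proof.
  unfold meetsb, meets. rewrite existsb_exists. split.
  - intros [r [Hr Hs]]. apply existsb_exists in Hs. destruct Hs as [r' [Hr' Heq]].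
    apply Nat.eqb_eq in Heq. subst. eauto.
  - intros [r [Hr Hs]]. exists r. split; [exact Hr|].
    apply existsb_exists. exists r. split; [exact Hs | apply Nat.eqb_refl].
Qed.

Inductive pointed : trace -> Prop :=
| pointed_one a : pointed [a]
| pointed_cons x t : pointed t -> meets x t -> pointed (x :: t).

Lemma swap_step_sym t1 t2 : swap_step t1 t2 -> swap_step t2 t1.
Proof.
  intros [s x y s' Hd]. constructor. intros r Hy Hx. exact (Hd r Hx Hy).
Qed.

Lemma perm_equiv_preserves (P : trace -> Prop) t1 t2 :
  (forall u1 u2, swap_step u1 u2 -> P u1 -> P u2) ->
  perm_equiv t1 t2 -> P t1 -> P t2.
Proof.
  intros Hswap Heq.
  enough ((P t1 -> P t2) /\ (P t2 -> P t1)) by tauto.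
  induction Heq as [u1 u2 Hs| | |]; try tauto.
  split; apply Hswap; [exact Hs | apply swap_step_sym, Hs].
Qed.

Lemma perm_equiv_length t1 t2 : perm_equiv t1 t2 -> length t1 = length t2.
Proof.
  intros Heq. apply (perm_equiv_preserves (fun u => length t1 = length u) t1 t2); auto.
  intros u1 u2 [s x y s' _]. rewrite !length_app. auto.
Qed.

Lemma perm_equiv_count_part p t1 t2 :
  perm_equiv t1 t2 -> count_part p t1 = count_part p t2.
Proof.
  intros Heq.
  apply (perm_equiv_preserves (fun u => count_part p t1 = count_part p u) t1 t2); auto.
  intros u1 u2 [s x y s' _]. rewrite !count_part_app, !count_part_cons. lia.
Qed.

Lemma pointed_swap s x y s' : disjoint_c x y ->
  pointed (s ++ x :: y :: s') -> pointed (s ++ y :: x :: s').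
Proof.
  intros Hd. induction s as [|z s IH]; simpl; intros Hp.
  - inversion Hp as [|? ? Hyt [r [Hrx Hr]]]; subst.
    rewrite part_t_cons, in_app_iff in Hr.
    destruct Hr as [Hry|Hr]; [exfalso; exact (Hd r Hrx Hry)|].
    inversion Hyt as [|? ? Hs' Hm]; subst; [contradiction|].
    constructor; [constructor; [exact Hs' | exists r; auto]|].
    destruct Hm as [r' [Hr'y Hr']]. exists r'. rewrite part_t_cons, in_app_iff. auto.
  - inversion Hp as [? Hnil|? ? Hp' [r [Hrz Hr]]]; subst.
    + destruct s; discriminate.
    + constructor; [exact (IH Hp')|]. exists r. split; [exact Hrz|].
      revert Hr. rewrite !part_t_app, !part_t_cons, !in_app_iff. tauto.
Qed.

Lemma pointed_suffix s t : t <> [] -> pointed (s ++ t) -> pointed t.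
Proof.
  intros Ht. induction s as [|z s IH]; simpl; intros Hp; [exact Hp|].
  inversion Hp; subst; [destruct s, t; simpl in *; congruence | auto].
Qed.

(* The last communication of a pointed trace cannot be swapped with its predecessor,
   which shares a participant with it. *)
Lemma swap_step_pointed_last a t1 t2 : swap_step t1 t2 ->
  pointed t1 /\ (exists t, t1 = t ++ [a]) -> pointed t2 /\ (exists t, t2 = t ++ [a]).
Proof.
  intros [s x y s' Hd] [Hp [t Ht]]. split; [apply pointed_swap; assumption|].
  destruct s' as [|b s''] using rev_ind.
  - apply pointed_suffix in Hp; [|discriminate].
    inversion Hp as [|? ? _ [r [Hrx Hry]]]; subst.
    simpl in Hry. rewrite app_nil_r in Hry. exfalso. exact (Hd r Hrx Hry).
  - replace (s ++ x :: y :: s'' ++ [b]) with ((s ++ x :: y :: s'') ++ [b]) in Ht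
      by (rewrite <- app_assoc; reflexivity).
    apply app_inj_tail in Ht as [_ ->].
    exists (s ++ y :: x :: s''). rewrite <- app_assoc. reflexivity.
Qed.

Lemma ev_snoc u a : ev (u ++ [a]) = cls (cprefix u [a]).
Proof. unfold ev. rewrite rev_app_distr. simpl. rewrite rev_involutive. reflexivity. Qed.

Lemma cprefix_pointed_last u a :
  pointed (cprefix u [a]) /\ exists t, cprefix u [a] = t ++ [a].
Proof.
  induction u as [|b u [Hp [t Ht]]]; simpl.
  - split; [constructor | exists []; reflexivity].
  - unfold cprefix1. destruct (meetsb b (cprefix u [a])) eqn:E.
    + split; [constructor; [exact Hp | apply meetsb_true_iff, E]|].
      exists (b :: t). rewrite Ht. reflexivity.
    + split; [exact Hp | exists t; exact Ht].
Qed.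

(* Once [t] involves p, no p-communication of [u] is dropped by causal prefixing. *)
Lemma cprefix_count_length p u t : In p (part_t t) ->
  count_part p (cprefix u t) = count_part p u + count_part p t /\
  In p (part_t (cprefix u t)) /\ length (cprefix u t) <= length u + length t.
Proof.
  intros Ht. induction u as [|b u [Hc [Hin Hlen]]]; simpl; [auto|].
  unfold cprefix1. rewrite count_part_cons.
  destruct (inpartb p b) eqn:E.
  - assert (Hm : meetsb b (cprefix u t) = true).
    { apply meetsb_true_iff. exists p. split; [apply inpartb_true_iff, E | exact Hin]. }
    rewrite Hm, count_part_cons, E, part_t_cons, in_app_iff. simpl. repeat split; auto; lia.
  - destruct (meetsb b (cprefix u t)).
    + rewrite count_part_cons, E, part_t_cons, in_app_iff. simpl. repeat split; auto; lia.
    + repeat split; auto; lia.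
Qed.

Lemma ev_snoc_representative p u a s :
  cls (cprefix u [a]) s -> ends_in p s ->
  ends_in p (u ++ [a]) /\ count_part p s = count_part p (u ++ [a]) /\
  length s <= length (u ++ [a]).
Proof.
  intros Hs [t [b [-> Hb]]].
  destruct (perm_equiv_preserves _ _ _ (swap_step_pointed_last a) Hs
              (cprefix_pointed_last u a)) as [_ [t' Ht']].
  apply app_inj_tail in Ht' as [_ <-].
  assert (Hpb : In p (part_t [b])) by (simpl; rewrite app_nil_r; exact Hb).
  destruct (cprefix_count_length p u [b] Hpb) as [Hc [_ Hlen]].
  rewrite <- (perm_equiv_count_part p _ _ Hs), <- (perm_equiv_length _ _ Hs).
  rewrite count_part_app, length_app. split; [exists u, b; auto | split; assumption].
Qed.

Lemma Forall2_In_l {A B} (R : A -> B -> Prop) xs ys x :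
  Forall2 R xs ys -> In x xs -> exists y, In y ys /\ R x y.
Proof.
  induction 1 as [|x' y' xs ys Hxy _ IH]; simpl; [contradiction|].
  intros [<-|Hx]; [eauto|]. destruct (IH Hx) as [y [Hy Hr]]. eauto.
Qed.

Lemma Forall2_In_r {A B} (R : A -> B -> Prop) xs ys y :
  Forall2 R xs ys -> In y ys -> exists x, In x xs /\ R x y.
Proof.
  induction 1 as [|x' y' xs ys Hxy _ IH]; simpl; [contradiction|].
  intros [<-|Hy]; [eauto|]. destruct (IH Hy) as [x [Hx Hr]]. eauto.
Qed.

Lemma InTr_bisim_l G1 G2 s : bisim G1 G2 -> InTr G1 s -> InTr G2 s.
Proof.
  intros Hb Ht. revert G2 Hb.
  induction Ht as [p q bs l G Hin|p q bs l G s Hin _ IH]; intros G2 Hb;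
    inversion Hb as [|? ? ? bs' Hbs]; subst;
    destruct (Forall2_In_l _ _ _ _ Hbs Hin) as [[l' G'] [Hin' [Hl HG]]];
    simpl in Hl, HG; subst.
  - eapply tr_one; eauto.
  - eapply tr_cons; eauto.
Qed.

Lemma InTr_bisim_r G1 G2 s : bisim G1 G2 -> InTr G2 s -> InTr G1 s.
Proof.
  intros Hb Ht. revert G1 Hb.
  induction Ht as [p q bs l G Hin|p q bs l G s Hin _ IH]; intros G1 Hb;
    inversion Hb as [|? ? bs' ? Hbs]; subst;
    destruct (Forall2_In_r _ _ _ _ Hbs Hin) as [[l' G'] [Hin' [Hl HG]]];
    simpl in Hl, HG; subst.
  - eapply tr_one; eauto.
  - eapply tr_cons; eauto.
Qed.

Lemma InTr_nonnil G s : InTr G s -> s <> [].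
Proof. destruct 1; discriminate. Qed.

Lemma InTr_app_r G u v : u <> [] -> v <> [] -> InTr G (u ++ v) ->
  exists G', subtree G' G /\ InTr G' v.
Proof.
  revert G. induction u as [|c u IH]; intros G Hu Hv Ht; [congruence|].
  inversion Ht as [? ? ? ? ? ? Hnil|? ? ? ? G1 ? Hin Ht1]; subst.
  - destruct u, v; simpl in *; congruence.
  - pose proof (rt_step _ child _ _ (child_intro p q _ _ _ Hin)) as Hchild.
    destruct u as [|c' u]; [exists G1; auto|].
    destruct (IH G1 ltac:(discriminate) Hv Ht1) as [G' [Hs Ht']].
    exists G'. split; [eapply rt_trans; eauto | exact Ht'].
Qed.

Lemma depth_first_occurrence p s : In p (part_t s) ->
  exists s1 a s2, s = s1 ++ a :: s2 /\ ~ In p (part_t s1) /\ In p (part_c a) /\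
    depth p s = S (length s1).
Proof.
  induction s as [|c s IH]; simpl; intros Hp; [contradiction|].
  destruct (inpartb p c) eqn:E.
  - exists [], c, s. apply inpartb_true_iff in E. simpl. auto.
  - assert (Hc : ~ In p (part_c c)) by (rewrite <- inpartb_true_iff; congruence).
    apply in_app_iff in Hp as [Hp|Hp]; [contradiction|].
    destruct (IH Hp) as [s1 [a [s2 [-> [H1 [Ha Hd]]]]]].
    exists (c :: s1), a, s2. rewrite Hd, part_t_cons, in_app_iff. simpl. intuition.
Qed.

Lemma list_common_bound {A} (P : A -> nat -> Prop) (l : list A) :
  (forall x n m, n <= m -> P x n -> P x m) ->
  (forall x, In x l -> exists n, P x n) -> exists n, forall x, In x l -> P x n.
Proof.
  intros Hmono. induction l as [|x l IH]; intros Hl; [exists 0; contradiction|].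
  destruct (Hl x (or_introl eq_refl)) as [n Hn].
  destruct IH as [m Hm]; [intros y Hy; apply Hl; right; exact Hy|].
  exists (max n m). intros y [<-|Hy].
  - apply (Hmono x n); [lia | exact Hn].
  - apply (Hmono y m); [lia | exact (Hm y Hy)].
Qed.

Lemma regular_bounded_uniform_depth G p : regular G -> bounded G ->
  exists D, forall G', subtree G' G -> forall s, InTr G' s -> depth p s <= D.
Proof.
  intros [l Hl] Hbd.
  set (P G'' D := forall G', subtree G' G -> bisim G' G'' ->
                  forall s, InTr G' s -> depth p s <= D).
  destruct (list_common_bound P l) as [D HD].
  - intros G'' n m Hnm HP G' Hs Hb s Ht. specialize (HP G' Hs Hb s Ht). lia.
  - intros G'' _. destruct (classic (exists G1, subtree G1 G /\ bisim G1 G''))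
      as [[G1 [Hs1 Hb1]]|Hnone].
    + destruct (Hbd p G1 Hs1) as [n Hn]. exists n. intros G' _ Hb s Ht.
      apply Hn, (InTr_bisim_r _ _ _ Hb1), (InTr_bisim_l _ _ _ Hb), Ht.
    + exists 0. intros G' Hs Hb. exfalso. eauto.
  - exists D. intros G' Hs. destruct (Hl G' Hs) as [G'' [Hin Hb]]. exact (HD G'' Hin G' Hs Hb).
Qed.

Lemma ends_in_part p s : ends_in p s -> In p (part_t s).
Proof.
  intros [t [a [-> Ha]]]. rewrite part_t_app, in_app_iff. simpl. rewrite app_nil_r. auto.
Qed.

Lemma ends_in_app_r p u v : v <> [] -> ends_in p (u ++ v) -> ends_in p v.
Proof.
  intros Hv [t [a [Heq Ha]]]. destruct (exists_last Hv) as [v' [b ->]].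
  rewrite app_assoc in Heq. apply app_inj_tail in Heq as [_ ->].
  exists v', a. auto.
Qed.

(* Cut [s] right after its first p-communication: the prefix is bounded by the depth
   and the rest is a trace of a subtree. *)
Lemma length_le_count_mul_depth p D G :
  (forall G', subtree G' G -> forall s, InTr G' s -> depth p s <= D) ->
  forall s, InTr G s -> ends_in p s -> length s <= count_part p s * D.
Proof.
  intros HD s. remember (count_part p s) as n eqn:Hn.
  revert G HD s Hn. induction n as [|n IH]; intros G HD s Hn Ht Hend;
    destruct (depth_first_occurrence p s (ends_in_part p s Hend))
      as [s1 [a [s2 [-> [H1 [Ha Hdepth]]]]]];
    rewrite count_part_block in Hn by assumption; [discriminate|].
  injection Hn as Hn.
  assert (Hprefix : S (length s1) <= D) by (rewrite <- Hdepth; exact (HD G (rt_refl _ _ _) _ Ht)).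
  rewrite length_app. simpl.
  destruct s2 as [|c s2]; [simpl; lia|].
  replace (s1 ++ a :: c :: s2) with ((s1 ++ [a]) ++ c :: s2) in Ht, Hend
    by (rewrite <- app_assoc; reflexivity).
  destruct (InTr_app_r G (s1 ++ [a]) (c :: s2)) as [G' [Hsub Ht']];
    [destruct s1; discriminate | discriminate | exact Ht |].
  assert (Hrest : length (c :: s2) <= n * D).
  { apply (IH G'); auto.
    - intros G'' Hs''. apply HD. eapply rt_trans; eauto.
    - eapply ends_in_app_r; [discriminate | exact Hend]. }
  lia.
Qed.

Theorem mainTheorem4 (G : gtype) :
  wf G -> regular G -> bounded G -> sem_bounded (S_of G).
Proof.
  (* Distinctness and non-emptiness of branches play no role in the bound. *)
  intros _ Hreg Hbd p _ k.
  destruct (regular_bounded_uniform_depth G p Hreg Hbd) as [D HD].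
  exists (k * D). intros g [sg [Htr ->]] s Hs Hk.
  destruct (kdecomp_count_ends_in p k s Hk) as [Hcount [->|Hend]]; [simpl; lia|].
  destruct (exists_last (InTr_nonnil G sg Htr)) as [u [a ->]].
  rewrite ev_snoc in Hs.
  destruct (ev_snoc_representative p u a s Hs Hend) as [Hend' [Hcount' Hlen]].
  pose proof (length_le_count_mul_depth p D G HD (u ++ [a]) Htr Hend') as Hbound.
  rewrite <- Hcount', Hcount in Hbound. lia.
Qed.
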